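(* Let $\nu\in\mathbb{Z}_{\ge0}\cup\{\infty\}$ be a changepoint, $T\ge0$ a random sequence length, and $\tau\ge0$ the detection time of an online changepoint detector, with $\tau$ independent of $T$ conditionally on $\nu=\infty$, and $\mu_\infty:=\mathbb{E}[\tau\mid\nu=\infty]<\infty$. Let $S^{\mathrm{ARL}}(t):=P(\tau>t\mid\nu=\infty)$, let $T^*_{\max}:=\inf\{t\mid P(T\le t)=1\}$ (assumed finite), and set $$\mu^{(\mathrm{KM})}_T:=\int_0^{T^*_{\max}}S^{\mathrm{ARL}}(t)\,dt,\qquad \mu^{(\mathrm{LB})}_T:=\mathbb{E}[\tau\mid\nu=\infty,\ \tau\le T],$$ $\mathcal{B}_{\mathrm{TR}}(\hat\mu^{(\mathrm{KM})}_T):=\mu^{(\mathrm{KM})}_T-\mu_\infty$ and $\mathcal{B}_{\mathrm{TR}}(\hat\mu^{(\mathrm{LB})}_T):=\mu^{(\mathrm{LB})}_T-\mu_\infty$. Then $$\mathcal{B}_{\mathrm{TR}}(\hat\mu^{(\mathrm{LB})}_T)\le\mathcal{B}_{\mathrm{TR}}(\hat\mu^{(\mathrm{KM})}_T)\le0.$$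
   Context: Setting: a sequence $X^{(0)},X^{(1)},\dots$ has frames drawn from a pre-change density before the changepoint $\nu$ and a post-change density from $\nu$ on ($\nu=\infty$ means no change); $\nu$ and the length $T$ are independent of the observations. $\mu_\infty$ is the average run length (ARL). $\mu^{(\mathrm{KM})}_T$ is the population version of the KM-ARL estimator with upper integration limit $a=T^*_{\max}$, and $\mu^{(\mathrm{LB})}_T$ the population version of the conventional estimator averaging detection times only over sequences where detection occurs within the sequence length. *)

From HB Require Import structures.
From mathcomp Require Import all_boot all_order all_algebra.
From mathcomp Require Import all_classical all_reals all_analysis.
Set Implicit Arguments. Unset Strict Implicit. Unset Printing Implicit Defensive.
Import Order.TTheory GRing.Theory Num.Theory.
Local Open Scope classical_set_scope.
Local Open Scope ring_scope.

Definition indep_rv d (Omega : measurableType d) (R : realType)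
  (P : probability Omega R) (X Y : Omega -> R) : Prop :=
  forall A B : set R, measurable A -> measurable B ->
    P (X @^-1` A `&` Y @^-1` B) = (P (X @^-1` A) * P (Y @^-1` B))%E.

Definition survival d (Omega : measurableType d) (R : realType)
  (P : probability Omega R) (tau : Omega -> R) (t : R) : R :=
  fine (P [set w | t < tau w]).

Definition Tstar_max d (Omega : measurableType d) (R : realType)
  (P : probability Omega R) (Tl : Omega -> R) : R :=
  inf [set t : R | P [set w | Tl w <= t] = 1%E].

Definition mu_ARL d (Omega : measurableType d) (R : realType)
  (P : probability Omega R) (tau : Omega -> R) : \bar R :=
  (\int[P]_w (tau w)%:E)%E.

Definition mu_KM d (Omega : measurableType d) (R : realType)
  (P : probability Omega R) (tau Tl : Omega -> R) : \bar R :=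
  (\int[lebesgue_measure]_(t in `[0%R, Tstar_max P Tl]%classic) (survival P tau t)%:E)%E.

(* mu^(LB)_T := E[tau | tau <= T] = E[tau 1{tau<=T}] / P(tau <= T) *)
Definition mu_LB d (Omega : measurableType d) (R : realType)
  (P : probability Omega R) (tau Tl : Omega -> R) : \bar R :=
  ((\int[P]_(w in [set w | (tau w <= Tl w)%R]) (tau w)%:E) *
   ((fine (P [set w | (tau w <= Tl w)%R]))^-1)%:E)%E.

From HB Require Import structures.
From mathcomp Require Import all_boot all_order all_algebra.
From mathcomp Require Import all_classical all_reals all_analysis.
From mathcomp Require Import measurable_realfun lra.
Import Order.TTheory GRing.Theory Num.Theory.
Local Open Scope classical_set_scope.
Local Open Scope ring_scope.

(* Both bounds come from the tail formula E[X] = \int_0^oo P(X > t) dt.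
   Truncating it at T*_max gives mu_KM <= mu_infty.  For mu_LB, the detected
   part tau 1{tau <= T} has tail P(tau <= T, tau > t); this tail vanishes
   beyond T*_max, and below it the independence of tau and T makes the events
   {tau <= T} and {tau > t} negatively correlated, so the tail is at most
   P(tau <= T) P(tau > t).  Integrating over [0, T*_max] gives
   E[tau; tau <= T] <= P(tau <= T) mu_KM. *)

Lemma measurable_preimage d d' (T : measurableType d) (U : measurableType d')
  (f : T -> U) (B : set U) :
  measurable_fun setT f -> measurable B -> measurable (f @^-1` B).
Proof. by move=> mf mB; rewrite -[_ @^-1` _]setTI; exact: mf. Qed.

Lemma measurable_gt d (T : measurableType d) (R : realType) (f : T -> R) (t : R) :
  measurable_fun setT f -> measurable [set w | t < f w].
Proof. by move=> mf; rewrite -preimage_itvoy; exact: measurable_preimage. Qed.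

Lemma measurable_le d (T : measurableType d) (R : realType) (f : T -> R) (t : R) :
  measurable_fun setT f -> measurable [set w | f w <= t].
Proof. by move=> mf; rewrite -preimage_itvNyc; exact: measurable_preimage. Qed.

Lemma measurable_le_fun d (T : measurableType d) (R : realType) (f g : T -> R) :
  measurable_fun setT f -> measurable_fun setT g -> measurable [set w | f w <= g w].
Proof.
move=> mf mg; rewrite -[X in measurable X]setTI -[X in _ `&` X]preimage_true.
exact: measurable_fun_ler.
Qed.

Lemma set_gt_mul_indic T (R : realType) (A : set T) (f : T -> R) (t : R) :
  0 <= t -> [set w | t < f w * \1_A w] = A `&` [set w | t < f w].
Proof.
move=> t0; apply/seteqP; split => w /=; rewrite indicE.
  case: (boolP (w \in A)) => [/set_mem Aw|_]; first by rewrite mulr1.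
  by rewrite mulr0 => /(le_lt_trans t0); rewrite ltxx.
by move=> [/mem_set -> ?]; rewrite mulr1.
Qed.

Local Open Scope ereal_scope.

(* The arithmetic core of negative correlation, with q = P(A `&` S),
   r = P(A `\` S), s = P S and g = P G for the independent events S, G. *)
Lemma lee_mul_split (R : realType) (q r s g : \bar R) :
  q \is a fin_num -> r \is a fin_num -> s \is a fin_num -> g \is a fin_num ->
  0 <= s <= 1 -> q <= s * g -> (1 - s) * g <= r -> q <= (r + q) * s.
Proof.
move=> /fineK <- /fineK <- /fineK <- /fineK <-.
rewrite -EFinB -!EFinM !lee_fin => /andP[s0 s1] qsg sgr.
have q_bound : (fine q * (1 - fine s) <= fine s * fine g * (1 - fine s))%R.
  by rewrite ler_wpM2r // subr_ge0.
have r_bound : (fine s * ((1 - fine s) * fine g) <= fine s * fine r)%R.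
  by rewrite ler_wpM2l.
nra.
Qed.

Lemma integral_itvcy_itvcc (R : realType) (h : R -> \bar R) (M : R) :
  (forall t, (0 <= t)%R -> (M < t)%R -> h t = 0) ->
  \int[lebesgue_measure]_(t in `[0%R, +oo[%classic) h t =
  \int[lebesgue_measure]_(t in `[0%R, M]%classic) h t.
Proof.
move=> h0; rewrite [LHS]integral_mkcond [RHS]integral_mkcond.
apply: eq_integral => t _; rewrite !patchE !mem_setE !in_itv /= andbT.
by case: (leP 0%R t) => //= t0; case: leP => // /h0 ->.
Qed.

Section probability_tails.
Context {d} {T : measurableType d} {R : realType} (P : probability T R).

Lemma ccdf_gtE (X : {RV P >-> R}) (t : R) : ccdf X t = P [set w | (t < X w)%R].
Proof. by rewrite /ccdf /distribution /pushforward /= preimage_itvoy. Qed.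

Lemma ge0_integral_ccdf (f : T -> R) :
  measurable_fun setT f -> (forall w, 0 <= f w)%R ->
  \int[P]_w (f w)%:E =
  \int[lebesgue_measure]_(t in `[0%R, +oo[%classic) P [set w | (t < f w)%R].
Proof.
move=> mf f0; pose X : {RV P >-> R} := mfun_Sub (mem_set mf : f \in mfun).
have := @ge0_expectation_ccdf _ _ _ P X f0; rewrite expectation_def => ->.
by apply: eq_integral => t _; rewrite ccdf_gtE.
Qed.

Lemma measurable_prob_gt (f : T -> R) :
  measurable_fun setT f ->
  measurable_fun setT (fun t : R => P [set w | (t < f w)%R]).
Proof.
move=> mf; pose X : {RV P >-> R} := mfun_Sub (mem_set mf : f \in mfun).
by apply: eq_measurable_fun (ccdf_measurable X) => t _; rewrite ccdf_gtE.
Qed.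

Lemma prob_gt_Tstar_max (f : T -> R) (t : R) :
  measurable_fun setT f -> (exists s, P [set w | (f w <= s)%R] = 1) ->
  (Tstar_max P f < t)%R -> P [set w | (t < f w)%R] = 0.
Proof.
move=> mf ex_s /(inf_lt ex_s)[s /= fs1 st].
apply/eqP; rewrite eq_le measure_ge0 andbT.
have -> : 0 = P (~` [set w | (f w <= s)%R]).
  by rewrite probability_setC ?fs1 ?subee //; exact: measurable_le.
apply: le_measure; rewrite ?inE; [exact: measurable_gt|exact/measurableC/measurable_le|].
by move=> w /= tf fs; have := lt_le_trans (lt_trans st tf) fs; rewrite ltxx.
Qed.

End probability_tails.

Section detection_time.
Context {d} {Omega : measurableType d} {R : realType} (P : probability Omega R).
Variables tau Tl : Omega -> R.
Hypotheses (mtau : measurable_fun setT tau) (mTl : measurable_fun setT Tl).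
Hypothesis tau_indep_Tl : indep_rv P tau Tl.

Let A := [set w | (tau w <= Tl w)%R].

Let mA : measurable A. Proof. exact: measurable_le_fun. Qed.

Lemma negcorr_detection_survival (t : R) :
  P (A `&` [set w | (t < tau w)%R]) <= P A * P [set w | (t < tau w)%R].
Proof.
set S := [set w | (t < tau w)%R]; set G := [set w | (t < Tl w)%R].
have mS : measurable S by exact: measurable_gt.
have mG : measurable G by exact: measurable_gt.
have indepS : P (S `&` G) = P S * P G.
  by rewrite /S /G -!preimage_itvoy; exact: tau_indep_Tl.
have indepSC : P (~` S `&` G) = P (~` S) * P G.
  rewrite /S /G -!preimage_itvoy preimage_setC.
  by apply: tau_indep_Tl => //; exact: measurableC.
rewrite (measureDI P mA mS); apply: (@lee_mul_split _ _ _ _ (P G)).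
- by apply: fin_num_measure; exact: measurableI.
- by apply: fin_num_measure; exact: measurableD.
- exact: fin_num_measure.
- exact: fin_num_measure.
- by rewrite measure_ge0 probability_le1.
- rewrite -indepS; apply: le_measure; rewrite ?inE; try exact: measurableI.
  by move=> w [/= tauTl tw]; split => //; exact: (lt_le_trans tw).
- rewrite -probability_setC // -indepSC; apply: le_measure; rewrite ?inE.
  + by apply: measurableI => //; exact: measurableC.
  + exact: measurableD.
  move=> w [nSw tTl]; split=> //; move/negP: nSw; rewrite -leNgt => taut.
  exact: le_trans taut (ltW tTl).
Qed.

Lemma mu_KM_prob_gt : mu_KM P tau Tl =
  \int[lebesgue_measure]_(t in `[0%R, Tstar_max P Tl]%classic) P [set w | (t < tau w)%R].
Proof.
apply: eq_integral => t _; rewrite /survival fineK // fin_num_measure //.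
exact: measurable_gt.
Qed.

Hypothesis tau_ge0 : forall w, (0 <= tau w)%R.

Lemma mu_KM_le_mu_ARL : mu_KM P tau Tl <= mu_ARL P tau.
Proof.
rewrite mu_KM_prob_gt /mu_ARL ge0_integral_ccdf //; apply: ge0_subset_integral => //.
(* The Borel and the Lebesgue measurable structures on R are convertible, but
   [exact:] does not unify them; plain [exact] does. *)
- apply: measurable_funTS; exact (measurable_prob_gt P tau mtau).
- by move=> t /=; rewrite !in_itv/= => /andP[-> _].
Qed.

Hypothesis Tl_bounded : exists t, P [set w | (Tl w <= t)%R] = 1.

Lemma integral_detected_le_mu_KM : \int[P]_(w in A) (tau w)%:E <= P A * mu_KM P tau Tl.
Proof.
pose f w := (tau w * \1_A w)%R.
have mf : measurable_fun setT f := measurable_funM mtau (measurable_indic mA).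
have f0 w : (0 <= f w)%R by rewrite mulr_ge0 // indicE.
have mtail := measurable_prob_gt P tau mtau.
have -> : \int[P]_(w in A) (tau w)%:E = \int[P]_w (f w)%:E.
  rewrite integral_mkcond; apply: eq_integral => w _; rewrite patchE /f indicE.
  by case: (boolP (w \in A)) => _; rewrite ?mulr1 ?mulr0.
rewrite ge0_integral_ccdf // (@integral_itvcy_itvcc _ _ (Tstar_max P Tl)); last first.
  move=> t t0 Mt; apply/eqP; rewrite eq_le measure_ge0 andbT.
  rewrite -(prob_gt_Tstar_max P _ _ mTl Tl_bounded Mt) set_gt_mul_indic //.
  apply: le_measure; rewrite ?inE.
  - by apply: measurableI => //; exact: measurable_gt.
  - exact: measurable_gt.
  by move=> w [/= tauTl tw]; exact: lt_le_trans tw tauTl.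
rewrite mu_KM_prob_gt -ge0_integralZl //; last by apply: measurable_funTS; exact mtail.
apply: ge0_le_integral => //.
- by apply: measurable_funTS; exact (measurable_prob_gt P f mf).
- by apply: measurable_funTS; apply: measurable_funeM; exact mtail.
move=> t /=; rewrite in_itv /= => /andP[t0 _]; rewrite set_gt_mul_indic //.
exact: negcorr_detection_survival.
Qed.

Lemma mu_LB_le_mu_KM : 0 < P A -> mu_LB P tau Tl <= mu_KM P tau Tl.
Proof.
move=> PA_gt0; have PA_fin : P A \is a fin_num by exact: fin_num_measure.
rewrite /mu_LB -/A lee_pdivrMr; last by rewrite -lte_fin fineK.
by rewrite fineK // muleC; exact: integral_detected_le_mu_KM.
Qed.

End detection_time.

Local Close Scope ereal_scope.

Theorem theorem4p3 (d : measure_display) (Omega : measurableType d)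
  (R : realType) (P : probability Omega R) (tau Tl : Omega -> R) :
  measurable_fun setT tau -> measurable_fun setT Tl ->
  (forall w, 0 <= tau w) -> (forall w, 0 <= Tl w) ->
  indep_rv P tau Tl ->
  P.-integrable setT (fun w => (tau w)%:E) ->
  (exists t : R, P [set w | Tl w <= t] = 1%E) ->
  (0 < P [set w | (tau w <= Tl w)%R])%E ->
  (mu_LB P tau Tl - mu_ARL P tau <= mu_KM P tau Tl - mu_ARL P tau)%E /\
  (mu_KM P tau Tl - mu_ARL P tau <= 0)%E.
Proof.
move=> mtau mTl tau_ge0 _ tau_indep_Tl tau_int Tl_bounded PA_gt0.
have ARL_fin : mu_ARL P tau \is a fin_num by exact: integrable_fin_num.
have KM_le_ARL := mu_KM_le_mu_ARL P tau Tl mtau tau_ge0.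
split; last by rewrite sube_le0.
apply: leeB => //; exact: mu_LB_le_mu_KM.
Qed.
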